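(* Let $\Gamma$ be a distance-regular graph with diameter $D\ge 3$, and let $\sigma_0,\dots,\sigma_D$ and $\rho_0,\dots,\rho_D$ be nontrivial pseudo cosine sequences of $\Gamma$. Then the following are equivalent: (i) $\sigma_0,\dots,\sigma_D$ and $\rho_0,\dots,\rho_D$ form a tight pair; (ii) there exists a real number $\varepsilon$ such that $$\sigma_i\rho_i-\sigma_{i-1}\rho_{i-1}=\varepsilon(\sigma_{i-1}\rho_i-\sigma_i\rho_{i-1})\qquad(1\le i\le D).$$
   Context: $\Gamma$ is a finite connected undirected graph without loops or multiple edges, distance-regular with diameter $D$, intersection numbers $a_i,b_i,c_i$ ($c_0=0$, $b_D=0$), valency $k$, $c_i+a_i+b_i=k$. For $\theta\in\mathbb{R}$ the pseudo cosine sequence for $\theta$ is the sequence of reals $\sigma_0,\dots,\sigma_D$ with $\sigma_0=1$ and $c_i\sigma_{i-1}+a_i\sigma_i+b_i\sigma_{i+1}=\theta\sigma_i$ for $0\le i\le D-1$. It is nontrivial if $\sigma_1\ne1$ (the trivial one is that for $\theta=k$, all ones). Pseudo cosine sequences $\sigma_i$, $\rho_i$ form a tight pair if $(\sigma_i\rho_i)_{i=0}^D$ is a pseudo cosine sequence. *)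

From HB Require Import structures.
From mathcomp Require Import all_boot all_order all_algebra.
From mathcomp Require Import reals.
Set Implicit Arguments. Unset Strict Implicit. Unset Printing Implicit Defensive.
Import Order.TTheory GRing.Theory Num.Theory.

Definition simple_graph (T : finType) (e : rel T) : Prop :=
  symmetric e /\ irreflexive e.

Definition connected_graph (T : finType) (e : rel T) : Prop :=
  forall x y : T, connect e x y.

Fixpoint ball (T : finType) (e : rel T) (n : nat) (x : T) : {set T} :=
  match n with
  | 0 => [set x]
  | n'.+1 => ball e n' x :|: [set y | [exists z in ball e n' x, e z y]]
  end.

(* graph distance: least n with y in ball n x (= #|T| if unreachable) *)
Definition dist (T : finType) (e : rel T) (x y : T) : nat :=
  find (fun n => y \in ball e n x) (iota 0 #|T|).

Definition diameter (T : finType) (e : rel T) : nat :=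
  \max_(x : T) \max_(y : T) dist e x y.

Definition distance_regular (T : finType) (e : rel T)
    (a b c : nat -> nat) : Prop :=
  forall x y : T,
    [/\ #|[set z | e y z & (dist e x z).+1 == dist e x y]| = c (dist e x y),
        #|[set z | e y z & dist e x z == dist e x y]| = a (dist e x y) &
        #|[set z | e y z & dist e x z == (dist e x y).+1]| = b (dist e x y)].

Local Open Scope ring_scope.

Definition pseudo_cosine (R : realType) (D : nat) (a b c : nat -> nat)
    (theta : R) (s : nat -> R) : Prop :=
  s 0%N = 1 /\
  forall i : nat, (i < D)%N ->
    (c i)%:R * s i.-1 + (a i)%:R * s i + (b i)%:R * s i.+1 = theta * s i.

Definition is_pseudo_cosine (R : realType) (D : nat) (a b c : nat -> nat)
    (s : nat -> R) : Prop :=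
  exists theta : R, pseudo_cosine D a b c theta s.

Definition nontrivial_pc (R : realType) (s : nat -> R) : Prop := s 1%N != 1.

Definition tight_pair (R : realType) (D : nat) (a b c : nat -> nat)
    (s r : nat -> R) : Prop :=
  is_pseudo_cosine D a b c (fun i => s i * r i).

From HB Require Import structures.
From mathcomp Require Import all_boot all_order all_algebra.
From mathcomp Require Import reals.
From mathcomp Require Import ring lra zify.
Import Order.TTheory GRing.Theory Num.Theory.

Set Implicit Arguments.
Unset Strict Implicit.
Unset Printing Implicit Defensive.

(* Write p_i = s_i r_i, Δp_i = p_i - p_{i-1} and W_i = s_{i-1} r_i - s_i r_{i-1}
   for the Casoratian of s and r.  The three-term recurrences of s (for θ) and
   of r (for θ') give  b_i W_{i+1} - c_i W_i = (θ' - θ) p_i,  while, since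
   c_i + a_i + b_i = k, p is a pseudo cosine sequence for η exactly when
   b_i Δp_{i+1} - c_i Δp_i = (η - k) p_i.  Hence Δp = ε W makes p a pseudo cosine
   sequence for η = k + ε (θ' - θ); conversely, once η - k = ε (θ' - θ), the
   sequence Δp - ε W solves a first-order recurrence starting at 0, so it
   vanishes.  Such an ε exists when θ <> θ'; when θ = θ', s and r agree up to
   index 2, and the recurrences of s and of s^2 at i = 1 force s_1^2 = 1, that
   is η = k.  The graph only has to supply c_1 = 1, c_i + a_i + b_i = b_0 and
   b_i > 0 for i < D, which are read off along a geodesic of length D. *)

Section Graph.
Variables (T : finType) (e : rel T).

Lemma dist_leq_ball n x y : y \in ball e n x -> (dist e x y <= n)%N.
Proof.
move=> yn; rewrite /dist; case: (ltnP n #|T|) => [nT | Tn].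
  by rewrite leqNgt; apply/negP => /(before_find 0%N); rewrite nth_iota // add0n yn.
by apply: leq_trans (find_size _ _) _; rewrite size_iota.
Qed.

Lemma ball_edge n x y z : y \in ball e n x -> e y z -> z \in ball e n.+1 x.
Proof.
by move=> yn yz /=; rewrite in_setU inE; apply/orP; right; apply/existsP; exists y; rewrite yn.
Qed.

Lemma path_last_ball x p : path e x p -> last x p \in ball e (size p) x.
Proof.
elim/last_ind: p => [|p z IHp]; first by rewrite /= inE.
rewrite rcons_path last_rcons size_rcons => /andP[/IHp pball pz].
exact: ball_edge pball pz.
Qed.

Hypothesis e_connected : connected_graph e.

Lemma dist_ltT x y : (dist e x y < #|T|)%N.
Proof.
have /connectP[p xp ->] := e_connected x y.
case: (shortenP xp) => q xq uq _.
apply: leq_ltn_trans (dist_leq_ball (path_last_ball xq)) _.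
by have := max_card (mem (x :: q)); rewrite (card_uniqP uq).
Qed.

Lemma dist_ball x y : y \in ball e (dist e x y) x.
Proof.
have has_ball : has (fun n => y \in ball e n x) (iota 0 #|T|).
  by rewrite has_find size_iota dist_ltT.
by have := nth_find 0%N has_ball; rewrite nth_iota ?add0n ?dist_ltT.
Qed.

Lemma dist_edge x y z : e y z -> (dist e x z <= (dist e x y).+1)%N.
Proof. by move=> yz; apply/dist_leq_ball/(ball_edge (dist_ball x y)). Qed.

Lemma distxx x : dist e x x = 0%N.
Proof. by apply/eqP; rewrite -leqn0 dist_leq_ball //= inE. Qed.

Lemma dist_eq0 x y : dist e x y = 0%N -> y = x.
Proof. by move=> xy0; have := dist_ball x y; rewrite xy0 /= inE => /eqP. Qed.

Lemma dist_pred_edge x y n : dist e x y = n.+1 -> exists2 z, e z y & dist e x z = n.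
Proof.
move=> xy; have := dist_ball x y; rewrite xy /= in_setU inE.
case/orP=> [/dist_leq_ball | /existsP[z /andP[zn zy]]]; first by rewrite xy ltnn.
exists z => //; apply/eqP; rewrite eqn_leq dist_leq_ball //=.
by have := dist_edge x zy; rewrite xy.
Qed.

Lemma dist_layer_edge x y i : (i < dist e x y)%N ->
  exists w w', [/\ dist e x w = i, dist e x w' = i.+1 & e w w'].
Proof.
move xyn: (dist e x y) => n; elim: n y xyn => [|n IHn] y xy // iy.
have [z zy xz] := dist_pred_edge xy.
case: (ltngtP i n) => [iz | ni | ->].
- exact: IHn z xz iz.
- by move: iy; rewrite ltnS leqNgt ni.
- by exists z, y.
Qed.

Lemma diameter_layer_edges : (0 < diameter e)%N -> exists x, forall i,
  (i < diameter e)%N -> exists w w', [/\ dist e x w = i, dist e x w' = i.+1 & e w w'].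
Proof.
case: (pickP (fun _ : T => true)) => [x0 _ _ | T0]; last by rewrite /diameter big_pred0.
have T_gt0 : (0 < #|T|)%N by apply/card_gt0P; exists x0.
have [x Dx] := bigop.eq_bigmax (fun x => \max_y dist e x y) T_gt0.
have [y xy] := bigop.eq_bigmax (fun y => dist e x y) T_gt0.
by exists x => i; rewrite /diameter Dx xy; apply: dist_layer_edge.
Qed.

Hypotheses (e_sym : symmetric e) (e_irr : irreflexive e).
Variables (a b c : nat -> nat).
Hypothesis e_dr : distance_regular e a b c.

Lemma card_neighbours x y :
  #|[set z | e y z]| = (c (dist e x y) + a (dist e x y) + b (dist e x y))%N.
Proof.
have [<- <- <-] := e_dr x y.
rewrite -!sum1dep_card big_mkcond !(big_mkcond (fun z => _ && _)) -!big_split /=.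
apply: eq_bigr => z _; case yz: (e y z) => //=.
have := dist_edge x yz; have := dist_edge x (etrans (e_sym z y) yz).
by case: eqP => ?; case: eqP => ?; case: eqP => ? /=; lia.
Qed.

Lemma drg_intersection_numbers : (0 < diameter e)%N ->
  [/\ c 1 = 1, forall i, (i < diameter e)%N -> c i + a i + b i = b 0
    & forall i, (i < diameter e)%N -> 0 < b i]%N.
Proof.
move=> D_gt0; have [x layer] := diameter_layer_edges D_gt0.
have [cxx axx _] := e_dr x x; rewrite distxx in cxx axx.
have c0 : c 0 = 0%N.
  by rewrite -cxx; apply/eqP; rewrite cards_eq0; apply/eqP/setP => z; rewrite !inE andbF.
have a0 : a 0 = 0%N.
  rewrite -axx; apply/eqP; rewrite cards_eq0; apply/eqP/setP => z.
  rewrite !inE; apply/negP => /andP[xz /eqP/dist_eq0 zx].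
  by rewrite zx e_irr in xz.
have degree y : #|[set z | e y z]| = b 0 by rewrite (card_neighbours y y) distxx c0 a0.
split => //.
- have [w [w' [/dist_eq0 -> xw' xw]]] := layer 0%N D_gt0.
  have [cw' _ _] := e_dr x w'; rewrite xw' in cw'.
  rewrite -cw'; apply/eqP/cards1P; exists x.
  apply/setP => z; rewrite !inE eqSS; apply/andP/eqP => [[_ /eqP/dist_eq0] | ->] //.
  by rewrite distxx e_sym xw.
- by move=> i /layer[w [w' [xw _ _]]]; rewrite -xw -card_neighbours degree.
- move=> i /layer[w [w' [xw xw' ww']]]; have [_ _ bw] := e_dr x w.
  rewrite xw in bw; rewrite -bw.
  by apply/card_gt0P; exists w'; rewrite inE ww' xw' eqxx.
Qed.

End Graph.

Local Open Scope ring_scope.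

Lemma sqr_eq1_of_squared_recurrence (R : realFieldType) (a b x t : R) :
  0 <= a -> 0 < b ->
  1 + a * x + b * t = (1 + a + b) * x ^+ 2 ->
  1 + a * x ^+ 2 + b * t ^+ 2 = (1 + a + b) * x ^+ 4 -> x ^+ 2 = 1.
Proof.
move=> a_ge0 b_gt0 rec_x rec_x2; set k := 1 + a + b.
(* Eliminating t leaves (x - 1)^2 Q = 0, and k (1 + a) Q is the sum of the
   nonnegative terms (k (1 + a) x + k)^2 and k a b. *)
pose Q := k * (1 + a) * x ^+ 2 + 2 * k * x + (k - a).
have : (x - 1) ^+ 2 * Q = 0.
  have bt : b * t = k * x ^+ 2 - a * x - 1 by rewrite -rec_x; ring.
  transitivity (b * (1 + a * x ^+ 2 - k * x ^+ 4) + (b * t) ^+ 2).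
    by rewrite bt /Q /k; ring.
  by rewrite -rec_x2 /k; ring.
move/eqP; rewrite mulf_eq0 sqrf_eq0 subr_eq0 => /orP[/eqP-> | /eqP Q0].
  by rewrite expr1n.
have k_gt0 : 0 < k by rewrite /k; lra.
have sum0 : (k * (1 + a) * x + k) ^+ 2 + k * a * b = 0.
  by rewrite -[RHS](mulr0 (k * (1 + a))) -Q0 /Q /k; ring.
have kb_gt0 : 0 < k * b by rewrite mulr_gt0.
have a0 : a = 0 by have := sqr_ge0 (k * (1 + a) * x + k); nra.
have : (k * (x + 1)) ^+ 2 = 0 by rewrite -sum0 a0; ring.
move/eqP; rewrite sqrf_eq0 mulf_eq0 gt_eqF //= addr_eq0 => /eqP->.
by rewrite sqrrN expr1n.
Qed.

Section TightPairs.
Variables (R : realType) (D : nat) (a b c : nat -> nat).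
Hypothesis valency : forall i, (i < D)%N -> (c i + a i + b i)%N = b 0%N.
Hypothesis b_gt0 : forall i, (i < D)%N -> (0 < b i)%N.
Hypothesis c1 : c 1%N = 1%N.
Hypothesis D_gt1 : (1 < D)%N.

Local Notation k := (b 0%N)%:R.
Local Notation pc := (pseudo_cosine D a b c).

(* Both vanish at i = 0, where i.-1 = 0. *)
Definition backward_diff (p : nat -> R) i := p i - p i.-1.
Definition casoratian (s r : nat -> R) i := s i.-1 * r i - s i * r i.-1.

Lemma casoratian_recurrence th th' s r : pc th s -> pc th' r ->
  forall i, (i < D)%N ->
  (b i)%:R * casoratian s r i.+1 - (c i)%:R * casoratian s r i = (th' - th) * (s i * r i).
Proof.
move=> [_ rec_s] [_ rec_r] i iD; rewrite /casoratian /=.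
transitivity (s i * ((c i)%:R * r i.-1 + (a i)%:R * r i + (b i)%:R * r i.+1)
            - r i * ((c i)%:R * s i.-1 + (a i)%:R * s i + (b i)%:R * s i.+1)).
  by ring.
by rewrite rec_s // rec_r //; ring.
Qed.

Lemma pseudo_cosine_diffP th p : pc th p <-> p 0%N = 1 /\ forall i, (i < D)%N ->
  (b i)%:R * backward_diff p i.+1 - (c i)%:R * backward_diff p i = (th - k) * p i.
Proof.
have E i : (i < D)%N ->
    (c i)%:R * p i.-1 + (a i)%:R * p i + (b i)%:R * p i.+1 - th * p i
  = (b i)%:R * backward_diff p i.+1 - (c i)%:R * backward_diff p i - (th - k) * p i.
  by move=> iD; rewrite /backward_diff -(valency iD) !natrD /=; ring.
split=> [[p0 rec_p] | [p0 diff_p]]; split=> // i iD; apply/eqP; rewrite -subr_eq0.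
- by rewrite -E // rec_p // subrr.
- by rewrite E // diff_p // subrr.
Qed.

Lemma recurrence_eq0 (v : nat -> R) : v 0%N = 0 ->
  (forall i, (i < D)%N -> (b i)%:R * v i.+1 = (c i)%:R * v i) ->
  forall i, (i <= D)%N -> v i = 0.
Proof.
move=> v0 rec_v; elim=> [|i IHi] iD //.
have := rec_v i iD; rewrite (IHi (ltnW iD)) mulr0 => /eqP.
by rewrite mulf_eq0 pnatr_eq0 eqn0Ngt b_gt0 // => /eqP.
Qed.

Lemma tight_of_diff_casoratian th th' s r eps : pc th s -> pc th' r ->
  (forall i, (1 <= i <= D)%N ->
     backward_diff (fun i => s i * r i) i = eps * casoratian s r i) ->
  pc (k + eps * (th' - th)) (fun i => s i * r i).
Proof.
move=> ps pr diff_eps; apply/pseudo_cosine_diffP; split.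
  by case: ps pr => [-> _] [-> _]; rewrite mulr1.
have dW j : (j <= D)%N -> backward_diff (fun i => s i * r i) j = eps * casoratian s r j.
  case: j => [_ | j jD]; last exact: diff_eps.
  by rewrite /backward_diff /casoratian !subrr mulr0.
move=> i iD; rewrite (dW i.+1 iD) (dW i (ltnW iD)).
transitivity (eps * ((b i)%:R * casoratian s r i.+1 - (c i)%:R * casoratian s r i)).
  by ring.
by rewrite (casoratian_recurrence ps pr) //; ring.
Qed.

Lemma diff_casoratian_of_tight th th' eta s r eps : pc th s -> pc th' r ->
  pc eta (fun i => s i * r i) -> eta - k = eps * (th' - th) ->
  forall i, (i <= D)%N ->
    backward_diff (fun i => s i * r i) i = eps * casoratian s r i.
Proof.
move=> ps pr /pseudo_cosine_diffP[_ diff_p] eta_eps.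
pose v i := backward_diff (fun i => s i * r i) i - eps * casoratian s r i.
suff v0 j : (j <= D)%N -> v j = 0 by move=> i /v0/eqP; rewrite subr_eq0 => /eqP.
apply: recurrence_eq0 => [|i iD].
  by rewrite /v /backward_diff /casoratian !subrr mulr0 subr0.
apply/eqP; rewrite -subr_eq0; apply/eqP; rewrite /v.
transitivity (((b i)%:R * backward_diff (fun i => s i * r i) i.+1
                - (c i)%:R * backward_diff (fun i => s i * r i) i)
  - eps * ((b i)%:R * casoratian s r i.+1 - (c i)%:R * casoratian s r i)).
  by ring.
by rewrite diff_p // (casoratian_recurrence ps pr) // eta_eps; ring.
Qed.

Lemma tight_same_theta (th eta : R) (s r : nat -> R) : pc th s -> pc th r ->
  pc eta (fun i => s i * r i) -> eta = k.
Proof.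
move=> [s0 rec_s] [r0 rec_r] [_ rec_p].
have D_gt0 : (0 < D)%N := ltnW D_gt1.
have [c0 a0] : c 0%N = 0%N /\ a 0%N = 0%N by have := valency D_gt0; lia.
have b_neq0 i : (i < D)%N -> (b i)%:R != 0 :> R.
  by move=> iD; rewrite pnatr_eq0 eqn0Ngt b_gt0.
have k_s1 : k * s 1%N = th.
  by have := rec_s 0%N D_gt0; rewrite /= c0 a0 s0 !mul0r !add0r mulr1.
have r1 : r 1%N = s 1%N.
  apply: (mulfI (b_neq0 0%N D_gt0)); rewrite k_s1.
  by have := rec_r 0%N D_gt0; rewrite /= c0 a0 r0 !mul0r !add0r mulr1.
have r2 : r 2%N = s 2%N.
  have := rec_r 1%N D_gt1; rewrite /= r0 r1 -(rec_s 1%N D_gt1) /= s0.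
  by move/(addrI _)/(mulfI (b_neq0 1%N D_gt1)).
have eta_k : eta = k * s 1%N ^+ 2.
  have := rec_p 0%N D_gt0; rewrite /= c0 a0 s0 r0 r1 !mul0r !add0r !mulr1 => <-.
  by rewrite expr2.
have k_a1_b1 : k = 1 + (a 1%N)%:R + (b 1%N)%:R :> R.
  by rewrite -(valency D_gt1) c1 !natrD.
have s1_sqr : s 1%N ^+ 2 = 1.
  apply: (@sqr_eq1_of_squared_recurrence _ (a 1%N)%:R (b 1%N)%:R _ (s 2%N) (ler0n _ _)).
  - by rewrite ltr0n b_gt0.
  - rewrite -k_a1_b1 expr2 mulrA k_s1 -(rec_s 1%N D_gt1) /= c1 s0; ring.
  - rewrite -k_a1_b1; transitivity (eta * (s 1%N * r 1%N)); last by rewrite eta_k r1; ring.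
    by rewrite -(rec_p 1%N D_gt1) /= c1 s0 r0 r1 r2; ring.
by rewrite eta_k s1_sqr mulr1.
Qed.

Lemma tight_shift (th th' eta : R) (s r : nat -> R) : pc th s -> pc th' r ->
  pc eta (fun i => s i * r i) -> exists eps, eta - k = eps * (th' - th).
Proof.
move=> ps pr pp; case: (eqVneq th th') => [eq_th | neq_th].
  by exists 0; rewrite (tight_same_theta ps _ pp) ?subrr ?mul0r // eq_th.
by exists ((eta - k) / (th' - th)); rewrite divfK // subr_eq0 eq_sym.
Qed.

Theorem tight_pairP (s r : nat -> R) :
  is_pseudo_cosine D a b c s -> is_pseudo_cosine D a b c r ->
  tight_pair D a b c s r <-> exists eps, forall i, (1 <= i <= D)%N ->
    backward_diff (fun i => s i * r i) i = eps * casoratian s r i.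
Proof.
move=> [th ps] [th' pr]; split=> [[eta pp] | [eps diff_eps]].
- have [eps eta_eps] := tight_shift ps pr pp.
  by exists eps => i /andP[_]; apply: diff_casoratian_of_tight ps pr pp eta_eps i.
- by exists (k + eps * (th' - th)); apply: tight_of_diff_casoratian ps pr diff_eps.
Qed.

End TightPairs.

Theorem theorem7p1 (R : realType) (T : finType) (e : rel T)
    (a b c : nat -> nat) (s r : nat -> R) :
  simple_graph e -> connected_graph e -> distance_regular e a b c ->
  (3 <= diameter e)%N ->
  is_pseudo_cosine (diameter e) a b c s -> nontrivial_pc s ->
  is_pseudo_cosine (diameter e) a b c r -> nontrivial_pc r ->
  (tight_pair (diameter e) a b c s r <->
   exists eps : R, forall i : nat, (1 <= i <= diameter e)%N ->
     s i * r i - s i.-1 * r i.-1 = eps * (s i.-1 * r i - s i * r i.-1)).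
Proof.
move=> [e_sym e_irr] e_conn e_dr D_ge3 ps _ pr _.
have D_gt1 : (1 < diameter e)%N := ltnW D_ge3.
have [c1 valency b_gt0] := drg_intersection_numbers e_conn e_sym e_irr e_dr (ltnW D_gt1).
exact (tight_pairP valency b_gt0 c1 D_gt1 ps pr).
Qed.
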